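(* Let $n\ge1$, let $P$ be a finite point set in general position and let the edges of $K_P$ be $2$-coloured. Suppose there are mutually avoiding sets $L,R\subset P$ with $|L|=|R|=2n^2$ such that all edges between $L$ and $R$ have the same colour. Then the colouring contains a monochromatic non-crossing copy of $L_{2n}$.
   Context: A point set is in general position if no three points are collinear; $K_P$ is the complete graph on $P$ with straight-segment edges. Two finite point sets $A,B$ are mutually avoiding if $|A|,|B|\ge2$, no line through two points of $A$ intersects the convex hull of $B$ and vice versa. A monochromatic non-crossing copy of a graph $G$ is an injective map $\phi:V(G)\to P$ such that all segments $\phi(x)\phi(y)$, $xy\in E(G)$, have the same colour and no two share a point other than a common endpoint. The ladder $L_{2n}$ consists of paths $u_1\cdots u_n$, $v_1\cdots v_n$ and edges $u_iv_i$, $i\in[n]$. *)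

From HB Require Import structures.
From mathcomp Require Import all_boot all_order all_algebra.
Set Implicit Arguments. Unset Strict Implicit. Unset Printing Implicit Defensive.
Import Order.TTheory GRing.Theory Num.Theory.
Local Open Scope ring_scope.

Section Geom.
Variable R : realFieldType.
Notation pt := (R * R)%type.

Definition det3 (a b c : pt) : R :=
  (b.1 - a.1) * (c.2 - a.2) - (b.2 - a.2) * (c.1 - a.1).
Definition collinear (a b c : pt) : bool := det3 a b c == 0.

Variable T : finType.
Variable p : T -> pt.

(* the point set P = image of p; distinct labels give distinct points,
   no three distinct points collinear *)
Definition general_position : Prop :=
  injective p /\
  forall x y z : T, x != y -> y != z -> x != z -> ~~ collinear (p x) (p y) (p z).

Definition in_conv (B : {set T}) (z : pt) : Prop :=
  exists w : T -> R,
    [/\ forall x, 0 <= w x,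
        forall x, x \notin B -> w x = 0,
        \sum_x w x = 1,
        z.1 = \sum_x w x * (p x).1 &
        z.2 = \sum_x w x * (p x).2].

Definition avoids (A B : {set T}) : Prop :=
  forall a a', a \in A -> a' \in A -> a != a' ->
    forall z, in_conv B z -> ~~ collinear (p a) (p a') z.

Definition mutually_avoiding (A B : {set T}) : Prop :=
  [/\ (2 <= #|A|)%N, (2 <= #|B|)%N, avoids A B & avoids B A].

Definition on_seg (a b z : pt) : Prop :=
  exists t : R, [/\ 0 <= t, t <= 1 &
    z = (a.1 + t * (b.1 - a.1), a.2 + t * (b.2 - a.2))].

Definition mono_noncrossing_copy (V : finType) (adj : rel V)
  (c : T -> T -> bool) (col : bool) (phi : V -> T) : Prop :=
  [/\ injective phi,
      forall x y, adj x y -> c (phi x) (phi y) = col &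
      forall x y x' y', adj x y -> adj x' y' ->
        ~ ((x = x' /\ y = y') \/ (x = y' /\ y = x')) ->
        forall z, on_seg (p (phi x)) (p (phi y)) z ->
                  on_seg (p (phi x')) (p (phi y')) z ->
        exists v, [/\ v = x \/ v = y, v = x' \/ v = y' & z = p (phi v)]].
End Geom.

(* Ladder L_{2n}: u_i = inl i, v_i = inr i (i : 'I_n) *)
Definition ladder_adj (n : nat) : rel ('I_n + 'I_n)%type :=
  fun a b => match a, b with
  | inl i, inl j => (i.+1 == j :> nat) || (j.+1 == i :> nat)
  | inr i, inr j => (i.+1 == j :> nat) || (j.+1 == i :> nat)
  | inl i, inr j => i == j
  | inr i, inl j => i == j
  end.

From HB Require Import structures.
From mathcomp Require Import all_boot all_order all_algebra.
From mathcomp Require Import ring lra zify.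
From Stdlib Require Import ClassicalEpsilon Classical.
Import Order.TTheory GRing.Theory Num.Theory.
Set Implicit Arguments. Unset Strict Implicit. Unset Printing Implicit Defensive.

(* Let A = L and B = R be the two mutually avoiding sets and fix o in B.
   For x, y in A the sign of the orientation det3 o x y does not depend on o
   (no line xy meets conv B), and "x comes before y as seen from B" is a
   strict total order on A; symmetrically B is ordered as seen from A.
   The proof has three ingredients.
   1. chain_or_clique (Erdos-Szekeres type): a strict total order on at least
      2n^2 elements whose pairs are 2-coloured contains n increasing elements
      whose consecutive pairs have colour col, or 2n elements pairwise of the
      other colour.  It is proved by labelling each element with the length of
      the longest col-chain ending at it.
   2. clique_ladder: 2n points of A pairwise of one colour contain a
      non-crossing ladder.  They are ordered as a convex "spiral" a_1 ... a_2n
      in which each a_i is joined to a_(i+1) and a_(i+2) without crossings;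
      u_i = a_(2i), v_i = a_(2i+1) is then a ladder.
   3. chains_ladder: two increasing col-chains u_1..u_n in A and v_1..v_n in B
      form a non-crossing ladder with the rungs u_i v_i, all A-B edges having
      colour col; crossings are excluded by orientation arguments only.
   The theorem applies 1 to A and to B with the colour of the A-B edges and
   concludes by 2 or 3. *)

Lemma bounded_max_witness (P : nat -> Prop) N : P 0 -> (forall k, P k -> k <= N) ->
  exists k, P k /\ forall k', P k' -> k' <= k.
Proof.
move=> P0 hb; apply: NNPP => hn.
have step k : P k -> exists k', P k' /\ k < k'.
  move=> Pk; apply: NNPP => h; apply: hn; exists k; split => // k' Pk'.
  case: (leqP k' k) => // lt; exfalso; apply: h; by exists k'.
have above m : exists k, P k /\ m <= k.
  elim: m => [|m [k [Pk mk]]]; first by exists 0.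
  have [k' [Pk' kk']] := step k Pk; exists k'; split => //; lia.
have [k [Pk hk]] := above N.+1; have := hb k Pk; lia.
Qed.

Section ChainOrClique.
Variable T : finType.
Variable A : {set T}.
Variable prec : rel T.
Hypothesis prec_trans : transitive prec.
Hypothesis prec_irr : irreflexive prec.
Hypothesis prec_total :
  forall x y, x \in A -> y \in A -> x != y -> prec x y || prec y x.
Variable c : T -> T -> bool.
Hypothesis c_sym : forall x y, c x y = c y x.
Variable col : bool.

Definition col_step x y := prec x y && (c x y == col).

Definition chain_ending k x :=
  exists s, [/\ size s = k, all (mem A) (rcons s x) & sorted col_step (rcons s x)].

Lemma chain_size_le s : all (mem A) s -> sorted col_step s -> size s <= #|A|.
Proof.
move=> hA hs.
have hu : uniq s.
  apply: (sorted_uniq prec_trans prec_irr); apply: sub_sorted hs => x y /andP [] //.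
rewrite cardE; apply: uniq_leq_size => // x xs.
by rewrite mem_enum; move/allP: hA => /(_ x xs).
Qed.

Lemma chain_ending_le k x : chain_ending k x -> k <= #|A|.
Proof. case=> s [<- hA hs]; have := chain_size_le hA hs; rewrite size_rcons; lia. Qed.

Lemma chain_ending0 x : x \in A -> chain_ending 0 x.
Proof. by move=> xA; exists [::]; rewrite /= xA. Qed.

Definition height x := epsilon (inhabits 0)
  (fun k => chain_ending k x /\ forall k', chain_ending k' x -> k' <= k).

Lemma heightP x : x \in A ->
  chain_ending (height x) x /\ forall k, chain_ending k x -> k <= height x.
Proof.
move=> xA; apply: (epsilon_spec (inhabits 0)
  (fun k => chain_ending k x /\ forall k', chain_ending k' x -> k' <= k)).
exact: (bounded_max_witness (chain_ending0 xA) (fun k => @chain_ending_le k x)).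
Qed.

Lemma height_step x y : x \in A -> y \in A -> col_step x y -> height x < height y.
Proof.
move=> xA yA sxy; have [[s [hs hA hsrt]] _] := heightP xA.
have [_ hmax] := heightP yA; apply: hmax; exists (rcons s x); split.
- by rewrite size_rcons hs.
- by rewrite all_rcons /= yA.
- move: hsrt; case: s {hs hA} => [|h t] /=; first by rewrite sxy.
  by move=> ht; rewrite (rcons_path _ _ (rcons t x)) ht /= last_rcons.
Qed.

Lemma same_height_colour x y : x \in A -> y \in A -> x != y ->
  height x = height y -> c x y = ~~ col.
Proof.
move=> xA yA xy e.
have no_step u v : u \in A -> v \in A -> height u = height v -> ~~ col_step u v.
  by move=> uA vA euv; apply/negP => /(height_step uA vA); rewrite euv ltnn.
case/orP: (prec_total xA yA xy) => hp.
- by have := no_step x y xA yA e; rewrite /col_step hp /=; case: (c x y); case: col.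
- have := no_step y x yA xA (esym e); rewrite /col_step hp /= c_sym.
  by case: (c x y); case: col.
Qed.

Lemma card_low_height (M N : nat) :
  (forall k, k < N -> #|[set x in A | height x == k]| <= M) ->
  #|[set x in A | height x < N]| <= N * M.
Proof.
elim: N => [|N IH] h.
  by rewrite leqn0 cards_eq0; apply/eqP/setP => x; rewrite !inE ltn0 andbF.
have -> : [set x in A | height x < N.+1] =
          [set x in A | height x < N] :|: [set x in A | height x == N].
  by apply/setP => x; rewrite !inE ltnS leq_eqVlt -andb_orr orbC.
apply: (leq_trans (leq_card_setU _ _)).
rewrite mulSn [M + _]addnC leq_add //; first by apply: IH => k kN; apply: h; lia.
exact: h.
Qed.

(* a height >= n-1 gives a chain of n elements; otherwise one of the n-1
   height classes has 2n elements, which are pairwise of colour ~~ col *)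
Lemma chain_or_clique n : 1 <= n -> 2 * n ^ 2 <= #|A| ->
  (exists s, [/\ size s = n, all (mem A) s & sorted col_step s]) \/
  (exists K, [/\ size K = 2 * n, uniq K, all (mem A) K &
      forall x y, x \in K -> y \in K -> x != y -> c x y = ~~ col]).
Proof.
move=> n1 hA.
case: (boolP [exists x in A, n.-1 <= height x]).
  case/existsP => x /andP [xA hx]; left.
  have [[s [hs hAll hsrt]] _] := heightP xA.
  exists (drop (size (rcons s x) - n) (rcons s x)); split.
  - rewrite size_drop size_rcons hs; lia.
  - by apply/allP => y /mem_drop; move/allP: hAll; apply.
  - exact: drop_sorted.
rewrite negb_exists => /forallP low.
case: (boolP [exists k : 'I_n.-1, 2 * n <= #|[set x in A | height x == k]|]).
  case/existsP => k hk; right.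
  set C := [set x in A | height x == k] in hk.
  exists (take (2 * n) (enum C)); split.
  - by rewrite size_take -cardE; move: hk; case: ltngtP => //; lia.
  - exact/take_uniq/enum_uniq.
  - by apply/allP => x /mem_take; rewrite mem_enum !inE => /andP [].
  - move=> x y /mem_take + /mem_take; rewrite !mem_enum !inE.
    move=> /andP [xA /eqP hx] /andP [yA /eqP hy] xy.
    by apply: same_height_colour; rewrite ?hx ?hy.
rewrite negb_exists => /forallP small.
have hb : #|[set x in A | height x < n.-1]| <= n.-1 * (2 * n).-1.
  apply: card_low_height => k kn; have := small (Ordinal kn); rewrite -ltnNge /=; lia.
have eA : [set x in A | height x < n.-1] = A.
  apply/setP => x; rewrite inE; case xA: (x \in A) => //=.
  by have := low x; rewrite xA /= -ltnNge.
by move: hb hA; rewrite eA; nia.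
Qed.
End ChainOrClique.

Local Open Scope ring_scope.

Section Orientation.
Variable R : realFieldType.
Implicit Types a b c u v x y z : (R * R)%type.

Lemma det3_cyc a b c : det3 a b c = det3 b c a.
Proof. rewrite /det3; ring. Qed.
Lemma det3_swap a b c : det3 a c b = - det3 a b c.
Proof. rewrite /det3; ring. Qed.
Lemma det3_aba a b : det3 a b a = 0.
Proof. rewrite /det3; ring. Qed.
Lemma det3_abb a b : det3 a b b = 0.
Proof. rewrite /det3; ring. Qed.

Lemma on_seg_det x y z : on_seg x y z -> exists t : R, [/\ 0 <= t, t <= 1 &
  forall u v, det3 u v z = (1 - t) * det3 u v x + t * det3 u v y].
Proof. by case=> t [t0 t1 ->]; exists t; split => // u v; rewrite /det3 /=; ring. Qed.

Lemma on_seg_sym x y z : on_seg x y z -> on_seg y x z.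
Proof.
case=> t [t0 t1 ->]; exists (1 - t); split; [lra|lra|congr pair; ring].
Qed.

Lemma on_seg_collinear x y z : on_seg x y z -> det3 x y z = 0.
Proof. by move=> /on_seg_det [t [_ _ ->]]; rewrite det3_aba det3_abb; ring. Qed.

Lemma on_seg_separated u v x y z : 0 < det3 u v x * det3 u v y ->
  on_seg u v z -> on_seg x y z -> False.
Proof.
move=> hp /on_seg_collinear h0 /on_seg_det [t [t0 t1 /(_ u v)]]; rewrite h0 => e.
have : (det3 u v x < 0 /\ det3 u v y < 0) \/ (0 < det3 u v x /\ 0 < det3 u v y).
  case: (ltrgtP (det3 u v x) 0) => hx.
  - by left; split => //; nra.
  - by right; split => //; nra.
  - by move: hp; rewrite hx mul0r ltxx.
case=> [[hx hy]|[hx hy]]; nra.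
Qed.

Lemma on_seg_common_end a b c z : det3 a b c != 0 ->
  on_seg a b z -> on_seg a c z -> z = a.
Proof.
move=> hn hb [s [s0 s1 ez]].
have : det3 a b z = s * det3 a b c by rewrite ez /det3 /=; ring.
rewrite (on_seg_collinear hb) => /esym/eqP; rewrite mulf_eq0 (negbTE hn) orbF.
by move=> /eqP s00; rewrite ez s00 !mul0r !addr0; case: a {hn hb ez}.
Qed.

(* a sign is +1 or -1; orientation conditions are stated as 0 < e * det3 .. *)
Definition is_sign (e : R) := e = 1 \/ e = -1.

Lemma is_signN e : is_sign e -> is_sign (- e).
Proof. by case=> ->; [right|left; rewrite opprK]. Qed.

Lemma sign_split (D e : R) : is_sign e -> D != 0 -> 0 < e * D \/ 0 < e * - D.
Proof.
move=> he nD; case: (ltrgtP D 0) => hD.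
- by case: he => ->; [right|left]; nra.
- by case: he => ->; [left|right]; nra.
- by move: nD; rewrite hD eqxx.
Qed.

Lemma sign_of (D : R) : D != 0 -> exists e, is_sign e /\ 0 < e * D.
Proof.
move=> nD; case: (sign_split (or_introl erefl) nD) => h; first by exists 1; split => //; left.
by exists (-1); split; [right|rewrite mulN1r; rewrite mul1r in h].
Qed.

Lemma sign_transfer (a b e : R) : is_sign e -> 0 < e * a -> 0 < a * b -> 0 < e * b.
Proof. by case=> ->; nra. Qed.

Lemma sign_prod_pos (a b e : R) : is_sign e -> 0 < e * a -> 0 < e * b -> 0 < a * b.
Proof. by case=> ->; nra. Qed.

Lemma convex_pos (Y Z s : R) : 0 <= s -> s <= 1 -> 0 < Y -> 0 < Z ->
  0 < (1 - s) * Y + s * Z.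
Proof. nra. Qed.

Lemma det3_fan_identity a b x y z :
  det3 b x y * det3 b a z + det3 b y z * det3 b a x + det3 b z x * det3 b a y = 0.
Proof. rewrite /det3; ring. Qed.

(* For points x, y, z on one side of the line ab, the angular order around b
   is transitive. *)
Lemma orient_trans a b x y z (e d : R) : is_sign e -> is_sign d ->
  0 < e * det3 a b x -> 0 < e * det3 a b y -> 0 < e * det3 a b z ->
  0 < d * det3 b x y -> 0 < d * det3 b y z -> 0 < d * det3 b x z.
Proof.
move=> he hd.
rewrite !(det3_cyc a b) !(det3_swap b a) (det3_swap b z x).
have := det3_fan_identity a b x y z.
move: (det3 b x y) (det3 b a z) (det3 b y z) (det3 b a x) (det3 b z x) (det3 b a y).
by move=> P Q U V W Z hid; case: he => ->; case: hd => -> h1 h2 h3 h4 h5; nra.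
Qed.
End Orientation.

Section PointSets.
Variable R : realFieldType.
Variable T : finType.
Variable p : T -> (R * R)%type.

Lemma card2_other (A : {set T}) x : (2 <= #|A|)%N -> exists2 y, y \in A & y != x.
Proof.
move=> h; have : (0 < #|A :\ x|)%N.
  rewrite (cardsD1 x A) in h; rewrite -(leq_add2l (x \in A)).
  by apply: leq_trans h; rewrite addn1; case: (x \in A).
by case/card_gt0P => y; rewrite !inE => /andP [yx yA]; exists y.
Qed.

Lemma sum_weight1 (y : T) (f : T -> R) :
  \sum_t (if t == y then 1 else 0) * f t = f y.
Proof.
rewrite (bigD1 y) //= eqxx mul1r big1 ?addr0 // => t ty; by rewrite (negbTE ty) mul0r.
Qed.

Lemma sum_weight2 (x y : T) (l : R) (f : T -> R) : x != y ->
  \sum_t (if t == x then l else if t == y then 1 - l else 0) * f t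
  = l * f x + (1 - l) * f y.
Proof.
move=> xy; rewrite (bigD1 x) //= eqxx (bigD1 y) //= 1?eq_sym // (negbTE xy) eqxx.
by rewrite big1 ?addr0 // => t /andP [ty tx]; rewrite (negbTE tx) (negbTE ty) mul0r.
Qed.

Lemma in_conv_point (B : {set T}) y : y \in B -> in_conv p B (p y).
Proof.
move=> yB; exists (fun t => if t == y then 1 else 0); split.
- by move=> t; case: eqP.
- by move=> t tB; case: eqP => // e; rewrite e yB in tB.
- by rewrite (eq_bigr (fun t => (if t == y then 1 else 0) * 1)) ?sum_weight1 // => t;
    rewrite mulr1.
- by rewrite sum_weight1.
- by rewrite sum_weight1.
Qed.

Lemma in_conv_segment (B : {set T}) x y l : x \in B -> y \in B -> x != y ->
  0 <= l -> l <= 1 ->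
  in_conv p B (l * (p x).1 + (1 - l) * (p y).1, l * (p x).2 + (1 - l) * (p y).2).
Proof.
move=> xB yB xy l0 l1.
exists (fun t => if t == x then l else if t == y then 1 - l else 0); split.
- by move=> t; case: eqP => // _; case: eqP => // _; lra.
- move=> t tB; case: eqP => [e|_]; first by rewrite e xB in tB.
  by case: eqP => // e; rewrite e yB in tB.
- rewrite (eq_bigr (fun t => (if t == x then l else if t == y then 1 - l else 0) * 1)).
    by rewrite (sum_weight2 l (fun _ => 1) xy); ring.
  by move=> t _; rewrite mulr1.
- by rewrite sum_weight2.
- by rewrite sum_weight2.
Qed.

Lemma avoid_det_neq0 A B a a' y : avoids p A B ->
  a \in A -> a' \in A -> a != a' -> y \in B -> det3 (p a) (p a') (p y) != 0.
Proof. by move=> av aA a'A aa yB; apply: av aA a'A aa _ (in_conv_point yB). Qed.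

Lemma avoid_same_side A B a a' x y : avoids p A B ->
  a \in A -> a' \in A -> a != a' -> x \in B -> y \in B ->
  0 < det3 (p a) (p a') (p x) * det3 (p a) (p a') (p y).
Proof.
move=> av aA a'A aa xB yB.
have nx := avoid_det_neq0 av aA a'A aa xB; have ny := avoid_det_neq0 av aA a'A aa yB.
case: (eqVneq x y) => [<-|xy]; first by rewrite -expr2 exprn_even_gt0.
set Dx := det3 _ _ (p x) in nx *; set Dy := det3 _ _ (p y) in ny *.
rewrite ltNge; apply/negP => hle.
have hlt : Dx * Dy < 0 by rewrite lt_neqAle hle mulf_neq0.
have hd : Dy - Dx != 0 by apply: contraTneq hlt => /eqP; rewrite subr_eq0 => /eqP->; nra.
set l := Dy / (Dy - Dx).
have [l0 l1] : 0 <= l /\ l <= 1.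
  have hq : (Dy - Dx) * (Dy - Dx)^-1 = 1 by rewrite mulfV.
  rewrite /l; set q := (Dy - Dx)^-1 in hq *.
  case: (ltrgtP Dx 0) => hx.
  - have q0 : 0 < q by rewrite /q invr_gt0; nra.
    split; nra.
  - have q0 : q < 0 by rewrite /q invr_lt0; nra.
    split; nra.
  - by move: nx; rewrite hx eqxx.
have := av a a' aA a'A aa _ (in_conv_segment xB yB xy l0 l1).
apply/negP/negPn; rewrite /collinear.
have -> : det3 (p a) (p a')
    (l * (p x).1 + (1 - l) * (p y).1, l * (p x).2 + (1 - l) * (p y).2)
  = l * Dx + (1 - l) * Dy by rewrite /Dx /Dy /det3 /=; ring.
by rewrite /l; apply/eqP; field.
Qed.

Lemma mutually_avoiding_sym A B : mutually_avoiding p A B -> mutually_avoiding p B A.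
Proof. by case=> *; split. Qed.

Lemma mutually_avoiding_neq A B x y : mutually_avoiding p A B ->
  x \in A -> y \in B -> x != y.
Proof.
case=> hA _ av _ xA yB; apply/eqP => exy; rewrite -exy in yB.
have [x' x'A x'x] := card2_other x hA.
have xx' : x != x' by rewrite eq_sym.
by have := avoid_det_neq0 av xA x'A xx' yB; rewrite det3_aba eqxx.
Qed.
End PointSets.

Section GeneralPosition.
Variable R : realFieldType.
Variable T : finType.
Variable p : T -> (R * R)%type.
Hypothesis gp : general_position p.

Lemma gp_det_neq0 x y z : x != y -> y != z -> x != z -> det3 (p x) (p y) (p z) != 0.
Proof. by case: gp => _ h; apply: h. Qed.

Lemma gp_common_end a b c z : a != b -> b != c -> a != c ->
  on_seg (p a) (p b) z -> on_seg (p a) (p c) z -> z = p a.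
Proof. by move=> ab bc ac; apply: on_seg_common_end; apply: gp_det_neq0. Qed.

Lemma gp_not_on_seg x y w : x != y -> y != w -> x != w -> ~ on_seg (p x) (p y) (p w).
Proof. by move=> xy yw xw /on_seg_collinear; apply/eqP; apply: gp_det_neq0. Qed.
End GeneralPosition.

(* The angular order on A as seen from the point o of B, oriented by e. *)
Section AngularOrder.
Variable R : realFieldType.
Variable T : finType.
Variable p : T -> (R * R)%type.
Hypothesis gp : general_position p.
Variables A B : {set T}.
Hypothesis hAB : mutually_avoiding p A B.
Variable o : T.
Hypothesis oB : o \in B.
Variable e : R.
Hypothesis he : is_sign e.

Definition ang_lt (x y : T) := [&& x \in A, y \in A & 0 < e * det3 (p o) (p x) (p y)].

Lemma ang_lt_irr : irreflexive ang_lt.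
Proof. by move=> x; rewrite /ang_lt det3_abb mulr0 ltxx !andbF. Qed.

Lemma ang_lt_total x y : x \in A -> y \in A -> x != y -> ang_lt x y || ang_lt y x.
Proof.
move=> xA yA xy; rewrite /ang_lt xA yA /=.
have nz : det3 (p o) (p x) (p y) != 0.
  by apply: gp_det_neq0; rewrite // eq_sym (mutually_avoiding_neq hAB).
by case: (sign_split he nz) => h; rewrite ?h // (det3_swap (p o) (p x) (p y)) h orbT.
Qed.

Lemma ang_lt_any o' x y : o' \in B -> ang_lt x y -> 0 < e * det3 (p o') (p x) (p y).
Proof.
move=> o'B /and3P [xA yA h].
have xy : x != y by apply: contraTneq h => ->; rewrite det3_abb mulr0 ltxx.
case: hAB => _ _ avAB _.
have := avoid_same_side avAB xA yA xy oB o'B.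
by rewrite -(det3_cyc (p o)) -(det3_cyc (p o')); apply: sign_transfer.
Qed.

(* transitivity: all of A lies on one side of a line o' o with o' in B, so
   the angular order around o is transitive (orient_trans) *)
Lemma ang_lt_trans : transitive ang_lt.
Proof.
move=> y x z /and3P [xA yA hxy] /and3P [_ zA hyz]; rewrite /ang_lt xA zA /=.
case: hAB => _ hB _ avBA.
have [o2 o2B o2o] := card2_other o hB.
have same := avoid_same_side avBA o2B oB o2o xA.
have nzx := avoid_det_neq0 avBA o2B oB o2o xA.
have [e0 [he0 h0x]] := sign_of nzx.
apply: (orient_trans he0 he h0x _ _ hxy hyz); apply: sign_transfer he0 h0x _.
- exact: same yA.
- exact: same zA.
Qed.

(* if a < b, b < c and b < d, the line o b strictly separates a from c and d,
   so the segments ab and cd do not meet *)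
Lemma ang_path_disjoint a b c d z : ang_lt a b -> ang_lt b c -> ang_lt b d ->
  on_seg (p a) (p b) z -> on_seg (p c) (p d) z -> False.
Proof.
move=> /and3P [_ _ hab] /and3P [_ _ hbc] /and3P [_ _ hbd].
move=> /on_seg_det [t [t0 t1 /(_ (p b) (p o)) h1]].
move=> /on_seg_det [s [s0 s1 /(_ (p b) (p o)) h2]].
rewrite h1 det3_aba mulr0 addr0 !(det3_cyc (p b) (p o))
  (det3_swap (p o) (p b) (p c)) (det3_swap (p o) (p b) (p d)) in h2.
move: hab hbc hbd h2.
move: (det3 (p o) (p a) (p b)) (det3 (p o) (p b) (p c)) (det3 (p o) (p b) (p d)).
move=> P Q U hab hbc hbd h2.
have l : 0 <= (1 - t) * (e * P) by apply: mulr_ge0; lra.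
have r := convex_pos s0 s1 hbc hbd.
have : e * ((1 - t) * P) = - ((1 - s) * (e * Q) + s * (e * U)) by rewrite h2; ring.
lra.
Qed.

Lemma ang_rung_disjoint a b w v z : v \in B ->
  (ang_lt w a && ang_lt w b) || (ang_lt a w && ang_lt b w) ->
  on_seg (p a) (p b) z -> on_seg (p w) (p v) z -> False.
Proof.
move=> vB hw h1 h2; apply: (on_seg_separated _ h2 h1).
rewrite (det3_cyc (p w) (p v) (p a)) (det3_cyc (p w) (p v) (p b)).
rewrite (det3_swap (p v) (p w) (p a)) (det3_swap (p v) (p w) (p b)) mulrNN.
case/orP: hw => /andP [/(ang_lt_any vB) h3 /(ang_lt_any vB) h4].
- exact: sign_prod_pos he h3 h4.
- by rewrite -mulrNN; apply: sign_prod_pos he _ _; rewrite -det3_swap.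
Qed.
End AngularOrder.

Section Noncrossing.
Variable R : realFieldType.
Variable T : finType.
Variable p : T -> (R * R)%type.

Definition meet_at_ends (x y x' y' : T) :=
  forall z, on_seg (p x) (p y) z -> on_seg (p x') (p y') z ->
  exists v, [/\ v = x \/ v = y, v = x' \/ v = y' & z = p v].

Definition noncrossing (E : T -> T -> Prop) := forall x y x' y', E x y -> E x' y' ->
  ~ ((x = x' /\ y = y') \/ (x = y' /\ y = x')) -> meet_at_ends x y x' y'.

Lemma meet_at_ends_sym x y x' y' : meet_at_ends x y x' y' -> meet_at_ends x' y' x y.
Proof. by move=> h z h1 h2; have [v [? ? ?]] := h z h2 h1; exists v. Qed.

Lemma meet_at_ends_swap x y x' y' : meet_at_ends x y x' y' -> meet_at_ends y x x' y'.
Proof.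
move=> h z h1 h2; have [v [v1 ? ?]] := h z (on_seg_sym h1) h2.
by exists v; split => //; case: v1; [right|left].
Qed.

Lemma noncrossing_symmetrize (E : T -> T -> Prop) :
  noncrossing E -> noncrossing (fun x y => E x y \/ E y x).
Proof.
move=> h x y x' y' [e1|e1] [e2|e2] ns.
- exact: h.
- by apply/meet_at_ends_sym/meet_at_ends_swap/meet_at_ends_sym/h => //; tauto.
- by apply/meet_at_ends_swap/h => //; tauto.
- apply/meet_at_ends_swap/meet_at_ends_sym/meet_at_ends_swap/meet_at_ends_sym.
  by apply: h => //; tauto.
Qed.

Lemma ladder_copy_of_edges n (phi : ('I_n + 'I_n)%type -> T) (c : T -> T -> bool) col
    (E : T -> T -> Prop) :
  injective phi -> (forall x y, ladder_adj x y -> c (phi x) (phi y) = col) ->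
  (forall x y, ladder_adj x y -> E (phi x) (phi y)) -> noncrossing E ->
  mono_noncrossing_copy p (@ladder_adj n) c col phi.
Proof.
move=> inj hc hE hN; split => // x y x' y' a1 a2 ns z h1 h2.
have ns' : ~ ((phi x = phi x' /\ phi y = phi y') \/ (phi x = phi y' /\ phi y = phi x')).
  by case=> [[/inj e1 /inj e2]|[/inj e1 /inj e2]]; apply: ns; [left|right].
have [v [v1 v2 ->]] := hN _ _ _ _ (hE _ _ a1) (hE _ _ a2) ns' z h1 h2.
case: v1 => ev.
- exists x; split => //; [by left| |by rewrite ev].
  by case: v2; rewrite ev => /inj ->; [left|right].
- exists y; split => //; [by right| |by rewrite ev].
  by case: v2; rewrite ev => /inj ->; [left|right].
Qed.
End Noncrossing.

Fixpoint square_edges (T : Type) (s : seq T) : seq (T * T) :=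
  if s is a :: s' then [seq (a, y) | y <- take 2 s'] ++ square_edges s' else [::].

Lemma square_edges_mem (T : eqType) (s : seq T) x y : (x, y) \in square_edges s ->
  [/\ x \in s, y \in s & (uniq s -> x != y)].
Proof.
elim: s => [//|a s IH] /=; rewrite mem_cat.
case/orP => [/mapP [w wt [-> ->]]|/IH [h1 h2 h3]].
- have ws := mem_take wt; rewrite mem_head inE ws orbT; split => // /andP [an _].
  by apply: contraNneq an => ->.
- by rewrite !inE h1 h2 !orbT; split => // /andP [_]; exact: h3.
Qed.

Lemma square_edges_next (T : eqType) (s : seq T) x0 k : (k.+1 < size s)%N ->
  (nth x0 s k, nth x0 s k.+1) \in square_edges s.
Proof.
elim: s k => [//|a s IH] [|k] /= hk; rewrite mem_cat.
- by case: s {IH} hk => [//|b s] _ /=; rewrite mem_head.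
- by rewrite IH ?orbT.
Qed.

Lemma square_edges_next2 (T : eqType) (s : seq T) x0 k : (k.+2 < size s)%N ->
  (nth x0 s k, nth x0 s k.+2) \in square_edges s.
Proof.
elim: s k => [//|a s IH] [|k] /= hk; rewrite mem_cat.
- by case: s {IH} hk => [//|b [//|c s]] _ /=; rewrite !inE eqxx orbT.
- by rewrite IH ?orbT.
Qed.

(* u_i, v_i are placed at positions 2i and 2i+1 of a sequence of length 2n;
   every ladder edge then joins positions at distance 1 or 2 *)
Definition ladder_index n (v : ('I_n + 'I_n)%type) : nat :=
  match v with inl i => (2 * i)%N | inr i => (2 * i).+1 end.

Lemma ladder_index_inj n : injective (@ladder_index n).
Proof.
by move=> [i|i] [j|j] /= h; [congr inl; apply: ord_inj| | |congr inr; apply: ord_inj]; lia.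
Qed.

Lemma ladder_index_lt n v : (@ladder_index n v < 2 * n)%N.
Proof. by case: v => i /=; have := ltn_ord i; lia. Qed.

Lemma ladder_adj_index n (v w : ('I_n + 'I_n)%type) : ladder_adj v w ->
  [\/ ladder_index w = (ladder_index v).+1, ladder_index w = (ladder_index v).+2,
       ladder_index v = (ladder_index w).+1 | ladder_index v = (ladder_index w).+2].
Proof.
case: v w => [i|i] [j|j] /=.
- by case/orP => /eqP h; [constructor 2|constructor 4]; lia.
- by move=> /eqP ->; constructor 1.
- by move=> /eqP ->; constructor 3.
- by case/orP => /eqP h; [constructor 2|constructor 4]; lia.
Qed.

Section Spiral.
Variable R : realFieldType.
Variable T : finType.
Variable p : T -> (R * R)%type.
Hypothesis gp : general_position p.

Lemma ladder_of_square n (s : seq T) (x0 : T) (c : T -> T -> bool) col :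
  size s = (2 * n)%N -> uniq s ->
  noncrossing p (fun x y => (x, y) \in square_edges s) ->
  (forall x y, x \in s -> y \in s -> x != y -> c x y = col) ->
  exists phi, mono_noncrossing_copy p (@ladder_adj n) c col phi.
Proof.
move=> hs us hN hc.
pose phi (v : ('I_n + 'I_n)%type) := nth x0 s (ladder_index v).
have inj : injective phi.
  move=> v w /eqP; rewrite /phi nth_uniq ?hs ?ladder_index_lt // => /eqP.
  exact: ladder_index_inj.
have adj_neq (v w : ('I_n + 'I_n)%type) : ladder_adj v w -> v != w.
  by move=> /ladder_adj_index h; apply/eqP => evw; rewrite evw in h; case: h; lia.
exists phi; apply: (ladder_copy_of_edges
  (E := fun x y => (x, y) \in square_edges s \/ (y, x) \in square_edges s)) => //.
- move=> v w a; apply: hc; rewrite ?mem_nth ?hs ?ladder_index_lt //.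
  by apply: contraNneq (adj_neq _ _ a) => /inj ->.
- have next k : (k.+1 < 2 * n)%N -> (nth x0 s k, nth x0 s k.+1) \in square_edges s.
    by rewrite -hs; apply: square_edges_next.
  have next2 k : (k.+2 < 2 * n)%N -> (nth x0 s k, nth x0 s k.+2) \in square_edges s.
    by rewrite -hs; apply: square_edges_next2.
  move=> v w /ladder_adj_index; rewrite /phi.
  move: (ladder_index_lt v) (ladder_index_lt w).
  move: (ladder_index v) (ladder_index w) => i j hi hj.
  by case=> eij; [left|left|right|right]; rewrite eij;
    [apply: next|apply: next2|apply: next|apply: next2]; lia.
- exact: noncrossing_symmetrize.
Qed.

Lemma extreme_point (a b : T) (e : R) (s : seq T) : is_sign e -> s != [::] ->
  (forall x, x \in s -> 0 < e * det3 (p a) (p b) (p x)) ->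
  (forall x y, x \in s -> y \in s -> x != y -> det3 (p b) (p x) (p y) != 0) ->
  exists2 c, c \in s & forall x, x \in s -> x != c -> 0 < e * det3 (p b) (p x) (p c).
Proof.
move=> he; elim: s => [//|y s IH] _ hs hgp.
have [->|sn] := altP (s =P [::]).
  by exists y; rewrite ?mem_head // => x; rewrite inE => /eqP ->; rewrite eqxx.
have ms x : x \in s -> x \in y :: s by move=> xs; rewrite inE xs orbT.
have [c cs hc] := IH sn (fun x xs => hs x (ms x xs))
  (fun x z xs zs => hgp x z (ms x xs) (ms z zs)).
have [yc|yc] := eqVneq y c.
  exists c; first by rewrite inE cs orbT.
  by move=> x; rewrite inE => /orP [/eqP ->|xs]; [rewrite yc eqxx|exact: hc].
have ys : y \in y :: s by rewrite mem_head.
case: (sign_split he (hgp _ _ ys (ms _ cs) yc)) => h.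
  by exists (c); [exact: ms|move=> x; rewrite inE => /orP [/eqP ->|xs] //; exact: hc].
rewrite -det3_swap in h.
exists y => // x; rewrite inE => /orP [/eqP ->|xs]; first by rewrite eqxx.
move=> xy; have [->|xc] := eqVneq x c; first exact: h.
apply: (@orient_trans _ (p a) (p b) (p x) (p c) (p y) e e) => //.
- exact: hs (ms _ xs).
- exact: hs (ms _ cs).
- exact: hs.
- exact: hc.
Qed.

Lemma fan_meet_at_ends (a b c w x y : T) (f : R) : (w = b \/ w = c) ->
  0 <= f * det3 (p b) (p c) (p x) -> 0 <= f * det3 (p b) (p c) (p y) ->
  f * det3 (p b) (p c) (p a) < 0 -> x != y -> meet_at_ends p a w x y.
Proof.
move=> hw hx hy ha xy z h1 h2.
have [t [t0 t1 ez]] := h1; have [s [s0 s1 ez2]] := h2.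
have hDw : det3 (p b) (p c) (p w) = 0 by case: hw => ->; rewrite ?det3_aba ?det3_abb.
have e1 : det3 (p b) (p c) z = (1 - t) * det3 (p b) (p c) (p a).
  have -> : det3 (p b) (p c) z =
      (1 - t) * det3 (p b) (p c) (p a) + t * det3 (p b) (p c) (p w).
    by rewrite ez /det3 /=; ring.
  by rewrite hDw mulr0 addr0.
have e2 : det3 (p b) (p c) z =
    (1 - s) * det3 (p b) (p c) (p x) + s * det3 (p b) (p c) (p y).
  by rewrite ez2 /det3 /=; ring.
have t_one : t = 1.
  have hge : 0 <= (1 - t) * (f * det3 (p b) (p c) (p a)).
    by rewrite mulrCA -e1 e2; nra.
  apply/eqP; rewrite eq_le t1 /= leNgt; apply/negP => tlt.
  by move: hge; rewrite pmulr_rge0 ?subr_gt0 // leNgt ha.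
have ezw : z = p w.
  by rewrite ez t_one; case: (p a) (p w) => [a1 a2] [w1 w2] /=; congr pair; ring.
rewrite ezw in h2 *.
have [wx|wx] := eqVneq w x; first by exists w; split; [right|left|].
have [wy|wy] := eqVneq w y; first by exists w; split; [right|right|].
by exfalso; apply: (gp_not_on_seg gp xy _ _ h2); rewrite eq_sym.
Qed.

(* Points S all strictly on one side of the line ab can be ordered as
   a, b, c_1, ..., c_m so that each point is joined to the next two without
   crossings: c_1 is chosen extreme around b, and the rest is ordered
   recursively starting from b, c_1; the new edges a b and a c_1 lie on the
   other side of the line b c_1. *)
Lemma spiral m : forall (a b : T) (S : seq T) e, size S = m ->
  uniq [:: a, b & S] -> is_sign e ->
  (forall x, x \in S -> 0 < e * det3 (p a) (p b) (p x)) ->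
  exists rest, perm_eq rest S /\
    noncrossing p (fun x y => (x, y) \in square_edges [:: a, b & rest]).
Proof.
elim: m => [|m IH] a b S e hS hu he hpos.
  move/size0nil: hS => ->; exists [::]; split => // x y x' y'.
  by rewrite /= !inE => /eqP [-> ->] /eqP [-> ->] ns; exfalso; apply: ns; left.
have Sn : S != [::] by apply: contra_eqN hS => /eqP ->.
move: hu; rewrite /= !inE negb_or => /and3P [/andP [ab aS] bS uS].
have gen x y : x \in S -> y \in S -> x != y -> det3 (p b) (p x) (p y) != 0.
  by move=> xS yS xy; apply: gp_det_neq0 => //; [apply: contraNneq bS => ->|
    apply: contraNneq bS => ->].
have [c cS hc] := extreme_point he Sn hpos gen.
have bc : b != c by apply: contraNneq bS => ->.
have ac : a != c by apply: contraNneq aS => ->.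
set S' := rem c S.
have uS' : uniq S' by rewrite rem_uniq.
have cS' : c \notin S' by rewrite (mem_rem_uniq _ uS) inE eqxx.
have bS' : b \notin S' by apply: contra bS => /mem_rem.
have hu' : uniq [:: b, c & S'] by rewrite /= !inE negb_or bc bS' cS' uS'.
have hpos' x : x \in S' -> 0 < - e * det3 (p b) (p c) (p x).
  rewrite (mem_rem_uniq _ uS) inE => /andP [xc xS].
  by rewrite (det3_swap (p b) (p x) (p c)) mulrNN; apply: hc.
have hS' : size S' = m by rewrite size_rem // hS.
have [rest [prest hN]] := IH b c S' (- e) hS' hu' (is_signN he) hpos'.
exists (c :: rest); split.
  rewrite perm_sym; apply: (perm_trans (perm_to_rem cS)); by rewrite perm_cons perm_sym.
have ur : uniq [:: b, c & rest].
  by rewrite (perm_uniq (_ : perm_eq _ [:: b, c & S'])) // !perm_cons.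
have side q : q \in [:: b, c & rest] -> 0 <= - e * det3 (p b) (p c) (p q).
  rewrite !inE => /orP [/eqP ->|/orP [/eqP ->|qr]].
  - by rewrite det3_aba mulr0.
  - by rewrite det3_abb mulr0.
  - by apply/ltW/hpos'; rewrite -(perm_mem prest).
have aneg : - e * det3 (p b) (p c) (p a) < 0.
  by rewrite -det3_cyc mulNr oppr_lt0; apply: hpos.
have new_old w x y : (w = b \/ w = c) -> (x, y) \in square_edges [:: b, c & rest] ->
    meet_at_ends p a w x y.
  move=> hw /square_edges_mem [xi yi /(_ ur) xy].
  exact: (fan_meet_at_ends hw (side x xi) (side y yi) aneg xy).
have esq : square_edges [:: a, b, c & rest] =
    [:: (a, b), (a, c) & square_edges [:: b, c & rest]] by rewrite /= take0.
apply: (eq_ind_r (fun s => noncrossing p (fun x y => (x, y) \in s)) _ esq).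
move=> x y x' y'; rewrite !inE.
move=> /orP [/eqP [-> ->]|/orP [/eqP [-> ->]|o1]].
all: move=> /orP [/eqP [-> ->]|/orP [/eqP [-> ->]|o2]] ns.
- by exfalso; apply: ns; left.
- by move=> z h1 h2; exists a; split; [left|left|exact: gp_common_end ab bc ac h1 h2].
- by apply: new_old o2; left.
- move=> z h1 h2; exists a; split; [by left|by left|].
  by apply: gp_common_end ac _ ab h1 h2 => //; rewrite eq_sym.
- by exfalso; apply: ns; left.
- by apply: new_old o2; right.
- by apply: meet_at_ends_sym; apply: new_old o1; left.
- by apply: meet_at_ends_sym; apply: new_old o1; right.
- exact: hN.
Qed.
End Spiral.

Section CliqueLadder.
Variable R : realFieldType.
Variable T : finType.
Variable p : T -> (R * R)%type.
Hypothesis gp : general_position p.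

(* If the points of K lie strictly on one side of a line o' o with o outside
   K, take a extreme around o and then b extreme around a: all the other
   points of K lie strictly on one side of the line ab. *)
Lemma spiral_start (K : seq T) (o' o : T) e : is_sign e -> uniq K -> (1 < size K)%N ->
  o \notin K -> (forall x, x \in K -> 0 < e * det3 (p o') (p o) (p x)) ->
  exists a b S, [/\ perm_eq [:: a, b & S] K, uniq [:: a, b & S] &
    forall x, x \in S -> 0 < e * det3 (p a) (p b) (p x)].
Proof.
move=> he uK hK oK hpos.
have Kn : K != [::] by apply: contraTneq hK => ->.
have gen x y : x \in K -> y \in K -> x != y -> det3 (p o) (p x) (p y) != 0.
  by move=> xK yK xy; apply: gp_det_neq0; rewrite // ?(contraNneq _ oK) // => ->.
have [a aK ha] := extreme_point he Kn hpos gen.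
set K1 := rem a K.
have uK1 : uniq K1 by rewrite rem_uniq.
have mK1 x : (x \in K1) = (x != a) && (x \in K) by rewrite (mem_rem_uniq _ uK) inE.
have hpos1 x : x \in K1 -> 0 < - e * det3 (p o) (p a) (p x).
  by rewrite mK1 => /andP [xa xK]; rewrite (det3_swap (p o) (p x) (p a)) mulrNN ha.
have K1n : K1 != [::].
  by apply: contraTneq hK => eK1; have := size_rem aK; rewrite -/K1 eK1 /=; lia.
have gen1 x y : x \in K1 -> y \in K1 -> x != y -> det3 (p a) (p x) (p y) != 0.
  by rewrite !mK1 => /andP [xa _] /andP [ya _] xy; apply: gp_det_neq0; rewrite // eq_sym.
have [b bK1 hb] := extreme_point (is_signN he) K1n hpos1 gen1.
exists a, b, (rem b K1); split.
- rewrite perm_sym; apply: (perm_trans (perm_to_rem aK)); rewrite perm_cons.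
  exact: perm_to_rem.
- have ba : b != a by move: bK1; rewrite mK1 => /andP [].
  have aS : a \notin rem b K1.
    by apply/negP => /mem_rem; rewrite mK1 eqxx.
  by rewrite /= inE negb_or eq_sym ba aS rem_uniq // (mem_rem_uniq _ uK1) inE eqxx.
- move=> x; rewrite (mem_rem_uniq _ uK1) inE => /andP [xb xK1].
  by have := hb x xK1 xb; rewrite (det3_swap (p a) (p b) (p x)) mulrNN.
Qed.

(* 2n points of A, pairwise of colour col, contain a monochromatic
   non-crossing ladder: B provides a line with all of A on one side *)
Lemma clique_ladder (A B : {set T}) n (K : seq T) (c : T -> T -> bool) col :
  mutually_avoiding p A B -> (1 <= n)%N -> size K = (2 * n)%N -> uniq K ->
  all (mem A) K -> (forall x y, x \in K -> y \in K -> x != y -> c x y = col) ->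
  exists phi, mono_noncrossing_copy p (@ladder_adj n) c col phi.
Proof.
move=> hAB n1 hK uK /allP KA hc.
have [_ hB _ avBA] := hAB.
have [o oB] : exists o, o \in B by apply/set0Pn; rewrite -card_gt0; lia.
have [o' o'B o'o] := card2_other o hB.
have oK : o \notin K.
  by apply/negP => /KA oA; have := mutually_avoiding_neq hAB oA oB; rewrite eqxx.
case: K hK uK KA hc oK => [|k K] hK uK KA hc oK; first by move: hK => /=; lia.
have kK : k \in k :: K := mem_head k K.
have [e [he hk]] := sign_of (avoid_det_neq0 avBA o'B oB o'o (KA k kK)).
have hpos x : x \in k :: K -> 0 < e * det3 (p o') (p o) (p x).
  by move=> xK; apply: sign_transfer he hk (avoid_same_side avBA o'B oB o'o _ _); apply: KA.
have K2 : (1 < size (k :: K))%N by rewrite hK; lia.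
have [a [b [S [pK uS hS]]]] := spiral_start he uK K2 oK hpos.
have [rest [prest hN]] := spiral gp (erefl (size S)) uS he hS.
have pK' : perm_eq [:: a, b & rest] (k :: K).
  by apply: perm_trans pK; rewrite !perm_cons.
apply: (ladder_of_square (n := n) (s := [:: a, b & rest]) a).
- by rewrite (perm_size pK') hK.
- by rewrite (perm_uniq pK').
- exact: hN.
- by move=> x y; rewrite !(perm_mem pK'); apply: hc.
Qed.
End CliqueLadder.

Section IncreasingChain.
Variable R : realFieldType.
Variable T : finType.
Variable p : T -> (R * R)%type.
Hypothesis gp : general_position p.
Variables A B : {set T}.
Hypothesis hAB : mutually_avoiding p A B.
Variable o : T.
Hypothesis oB : o \in B.
Variable e : R.
Hypothesis he : is_sign e.
Variable n : nat.
Variable s : seq T.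
Variable x0 : T.
Hypothesis hs : size s = n.
Hypothesis s_sorted : sorted (ang_lt p A o e) s.
Hypothesis s_in : all (mem A) s.

Local Notation u i := (nth x0 s i).

Lemma chain_lt i j : (i < j)%N -> (j < n)%N -> ang_lt p A o e (u i) (u j).
Proof.
move=> ij jn; apply: (sorted_ltn_nth (ang_lt_trans hAB oB he)); rewrite ?inE ?hs //.
exact: ltn_trans ij jn.
Qed.

Lemma chain_in i : (i < n)%N -> u i \in A.
Proof. by move=> hi; move/allP: s_in; apply; rewrite mem_nth // hs. Qed.

Lemma chain_neq i j : (i < n)%N -> (j < n)%N -> i != j -> u i != u j.
Proof.
move=> hi hj ij; case: (ltngtP i j) => [lt|lt|eq]; last by rewrite eq eqxx in ij.
- by apply/eqP => E; have := chain_lt lt hj; rewrite E ang_lt_irr.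
- by apply/eqP => E; have := chain_lt lt hi; rewrite E ang_lt_irr.
Qed.

Lemma chain_edges_meet i j : (i.+1 < n)%N -> (j.+1 < n)%N -> i != j ->
  meet_at_ends p (u i) (u i.+1) (u j) (u j.+1).
Proof.
wlog ij : i j / (i < j)%N.
  move=> wl; case: (ltngtP i j) => [lt|lt|_] // hi hj _.
  - by apply: wl; rewrite // neq_ltn lt.
  - by apply/meet_at_ends_sym/wl; rewrite // neq_ltn lt.
move=> _ hj _ z h1 h2.
have [ej|nej] := eqVneq j i.+1.
  subst j; exists (u i.+1); split; [by right|by left|].
  by apply: (gp_common_end gp _ _ _ (on_seg_sym h1) h2); apply: chain_neq; lia.
exfalso; apply: (ang_path_disjoint (A := A) (o := o) (e := e) _ _ _ h1 h2);
  by apply: chain_lt; lia.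
Qed.

Lemma chain_rung_meet i j v : (i.+1 < n)%N -> (j < n)%N -> v \in B ->
  meet_at_ends p (u i) (u i.+1) (u j) v.
Proof.
move=> hi hj vB z h1 h2.
have nv k : (k < n)%N -> u k != v.
  by move=> hk; apply: (mutually_avoiding_neq hAB); rewrite ?chain_in.
have [ej|nej] := eqVneq j i.
  subst j; exists (u i); split; [by left|by left|].
  by apply: (gp_common_end gp _ _ _ h1 h2); rewrite ?nv ?chain_neq //; lia.
have [ej|nej2] := eqVneq j i.+1.
  subst j; exists (u i.+1); split; [by right|by left|].
  by apply: (gp_common_end gp _ _ _ (on_seg_sym h1) h2); rewrite ?nv ?chain_neq //; lia.
exfalso; apply: (ang_rung_disjoint hAB oB he vB _ h1 h2).
by case: (ltngtP j i) => hji; [apply/orP; left|apply/orP; right|];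
  rewrite ?chain_lt //; lia.
Qed.

Lemma chain_far_meet i x y : (i.+1 < n)%N -> x \in B -> y \in B ->
  meet_at_ends p (u i) (u i.+1) x y.
Proof.
move=> hi xB yB z h1 h2; exfalso; case: hAB => _ _ avAB _.
apply: (on_seg_separated _ h1 h2); apply: (avoid_same_side avAB) => //;
  rewrite ?chain_in ?chain_neq //; lia.
Qed.
End IncreasingChain.

Section ChainsLadder.
Variable R : realFieldType.
Variable T : finType.
Variable p : T -> (R * R)%type.
Hypothesis gp : general_position p.
Variables A B : {set T}.
Hypothesis hAB : mutually_avoiding p A B.
Variables a0 b0 : T.
Hypothesis a0A : a0 \in A.
Hypothesis b0B : b0 \in B.
Variable c : T -> T -> bool.
Hypothesis c_sym : forall x y, c x y = c y x.
Variable col : bool.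
Hypothesis cross_col : forall x y, x \in A -> y \in B -> c x y = col.
Variable n : nat.
Variables su sv : seq T.
Hypothesis su_size : size su = n.
Hypothesis sv_size : size sv = n.
Hypothesis su_in : all (mem A) su.
Hypothesis sv_in : all (mem B) sv.
Hypothesis su_sorted : sorted (col_step (ang_lt p A b0 1) c col) su.
Hypothesis sv_sorted : sorted (col_step (ang_lt p B a0 (-1)) c col) sv.

Local Notation u i := (nth b0 su i).
Local Notation v i := (nth b0 sv i).

Let hBA : mutually_avoiding p B A := mutually_avoiding_sym hAB.
Let pos : is_sign (1 : R) := or_introl erefl.
Let neg : is_sign (-1 : R) := or_intror erefl.

Let su_ang : sorted (ang_lt p A b0 1) su.
Proof. by apply: sub_sorted su_sorted => x y /andP []. Qed.
Let sv_ang : sorted (ang_lt p B a0 (-1)) sv.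
Proof. by apply: sub_sorted sv_sorted => x y /andP []. Qed.

Let u_in i : (i < n)%N -> u i \in A. Proof. exact: chain_in. Qed.
Let v_in i : (i < n)%N -> v i \in B. Proof. exact: chain_in. Qed.

Lemma step_colour (s : seq T) prec i : sorted (col_step prec c col) s ->
  (i.+1 < size s)%N -> c (nth b0 s i) (nth b0 s i.+1) = col.
Proof. by move=> /(sortedP b0) /(_ i) h /h /andP [_ /eqP]. Qed.

(* two rungs u_i v_i and u_j v_j (i < j) do not meet: u_j and v_j lie on the
   same side of the line u_i v_i *)
Lemma rungs_disjoint i j z : (i < j)%N -> (j < n)%N ->
  on_seg (p (u i)) (p (v i)) z -> on_seg (p (u j)) (p (v j)) z -> False.
Proof.
move=> ij jn; have i_n : (i < n)%N by lia.
apply: on_seg_separated.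
have hu := ang_lt_any hAB b0B pos (v_in i_n) (chain_lt hAB b0B pos b0 su_size su_ang ij jn).
have hv := ang_lt_any hBA a0A neg (u_in i_n) (chain_lt hBA a0A neg b0 sv_size sv_ang ij jn).
rewrite (det3_cyc (p (u i))) (det3_swap (p (v i)) (p (u i))).
by move: hu hv; rewrite mul1r mulN1r oppr_gt0 => hu hv; nra.
Qed.

Definition ladder_edge x y :=
  [\/ exists2 i, (i.+1 < n)%N & x = u i /\ y = u i.+1,
      exists2 i, (i.+1 < n)%N & x = v i /\ y = v i.+1 |
      exists2 i, (i < n)%N & x = u i /\ y = v i].

Lemma ladder_edges_noncrossing : noncrossing p ladder_edge.
Proof.
have UU := chain_edges_meet gp hAB b0B pos su_size su_ang su_in.
have VV := chain_edges_meet gp hBA a0A neg sv_size sv_ang sv_in.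
have UW := chain_rung_meet gp hAB b0B pos su_size su_ang su_in.
have VW := chain_rung_meet gp hBA a0A neg sv_size sv_ang sv_in.
have UB := chain_far_meet hAB b0B pos su_size su_ang su_in.
have VB := chain_far_meet hBA a0A neg sv_size sv_ang sv_in.
move=> x y x' y' [[i hi [-> ->]]|[i hi [-> ->]]|[i hi [-> ->]]]
  [[j hj [-> ->]]|[j hj [-> ->]]|[j hj [-> ->]]] ns.
- apply: UU => //; apply: contra_not_neq ns => ->; by left.
- exact: UB hi (v_in (ltnW hj)) (v_in hj).
- exact: UW hi hj (v_in hj).
- exact: VB hi (u_in (ltnW hj)) (u_in hj).
- apply: VV => //; apply: contra_not_neq ns => ->; by left.
- apply/meet_at_ends_sym/meet_at_ends_swap/meet_at_ends_sym.
  exact: VW hi hj (u_in hj).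
- by apply: meet_at_ends_sym; apply: UW hj hi (v_in hi).
- by apply/meet_at_ends_swap/meet_at_ends_sym; apply: VW hj hi (u_in hi).
- case: (ltngtP i j) => [ij|ji|eij]; last by exfalso; apply: ns; left; rewrite eij.
  + by move=> z h1 h2; exfalso; apply: (rungs_disjoint ij hj h1 h2).
  + by move=> z h1 h2; exfalso; apply: (rungs_disjoint ji hi h2 h1).
Qed.

Lemma chains_ladder : exists phi, mono_noncrossing_copy p (@ladder_adj n) c col phi.
Proof.
pose phi (x : ('I_n + 'I_n)%type) := match x with inl i => u i | inr i => v i end.
exists phi; apply: (ladder_copy_of_edges (E := fun x y => ladder_edge x y \/ ladder_edge y x)).
- move=> [i|i] [j|j] /= E.
  + congr inl; apply: ord_inj; apply: contra_eq E.
    exact: (chain_neq hAB b0B pos b0 su_size su_ang).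
  + by have := mutually_avoiding_neq hAB (u_in (ltn_ord i)) (v_in (ltn_ord j)); rewrite E eqxx.
  + by have := mutually_avoiding_neq hAB (u_in (ltn_ord j)) (v_in (ltn_ord i)); rewrite E eqxx.
  + congr inr; apply: ord_inj; apply: contra_eq E.
    exact: (chain_neq hBA a0A neg b0 sv_size sv_ang).
- move=> [i|i] [j|j] /=; have := ltn_ord i; have := ltn_ord j => hj hi.
  + case/orP => /eqP h; [|rewrite c_sym];
    rewrite -h (step_colour su_sorted) // su_size; lia.
  + by move=> /eqP ->; rewrite cross_col ?u_in ?v_in.
  + by move=> /eqP ->; rewrite c_sym cross_col ?u_in ?v_in.
  + case/orP => /eqP h; [|rewrite c_sym];
    rewrite -h (step_colour sv_sorted) // sv_size; lia.
- move=> [i|i] [j|j] /=; have := ltn_ord i; have := ltn_ord j => hj hi.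
  + case/orP => /eqP h; [left; constructor 1; exists i|right; constructor 1; exists j];
      rewrite -?h //; lia.
  + by move=> /eqP <-; left; constructor 3; exists i.
  + by move=> /eqP ->; right; constructor 3; exists j.
  + case/orP => /eqP h; [left; constructor 2; exists i|right; constructor 2; exists j];
      rewrite -?h //; lia.
- exact/noncrossing_symmetrize/ladder_edges_noncrossing.
Qed.
End ChainsLadder.

Unset Implicit Arguments.
Theorem mainTheorem10 (R : realFieldType) (T : finType) (p : T -> (R * R)%type)
  (n : nat) (c : T -> T -> bool) (L Rt : {set T}) :
  (1 <= n)%N ->
  general_position p ->
  (forall x y, c x y = c y x) ->
  #|L| = (2 * n ^ 2)%N -> #|Rt| = (2 * n ^ 2)%N ->
  mutually_avoiding p L Rt ->
  (exists col : bool, forall x y, x \in L -> y \in Rt -> c x y = col) ->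
  exists (col : bool) (phi : ('I_n + 'I_n)%type -> T),
    mono_noncrossing_copy p (@ladder_adj n) c col phi.
Proof.
move=> n1 gp c_sym hL hR hLR [col hcol].
have hRL := mutually_avoiding_sym hLR.
have [l0 l0L] : exists l, l \in L by apply/set0Pn; rewrite -card_gt0 hL; lia.
have [r0 r0R] : exists r, r \in Rt by apply/set0Pn; rewrite -card_gt0 hR; lia.
have pos : is_sign (1 : R) by left.
have neg : is_sign (-1 : R) by right.
case: (chain_or_clique (ang_lt_trans hLR r0R pos) (ang_lt_irr p L r0 1)
    (ang_lt_total gp hLR r0R pos) c_sym col n1 (eq_leq (esym hL)))
  => [[su [su_size su_in su_sorted]]|[K [hK uK KL hcK]]]; last first.
  by exists (~~ col); exact: (clique_ladder gp hLR n1 hK uK KL hcK).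
case: (chain_or_clique (ang_lt_trans hRL l0L neg) (ang_lt_irr p Rt l0 (-1))
    (ang_lt_total gp hRL l0L neg) c_sym col n1 (eq_leq (esym hR)))
  => [[sv [sv_size sv_in sv_sorted]]|[K [hK uK KR hcK]]]; last first.
  by exists (~~ col); exact: (clique_ladder gp hRL n1 hK uK KR hcK).
exists col; exact: (chains_ladder gp hLR l0L r0R c_sym hcol su_size sv_size
  su_in sv_in su_sorted sv_sorted).
Qed.
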